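(* Let $p$ be even and let $\mathcal{C}_0$ be a two-sided $p$-periodic CMV matrix with discriminant $\Delta_{\mathcal{C}_0}$ and isospectral torus $\mathcal{T}_{\mathcal{C}_0}$. Given a two-sided (not a priori periodic) CMV matrix $\mathcal{C}$, we have $\Delta_{\mathcal{C}_0}(\mathcal{C})=S^p+S^{-p}$ if and only if $\mathcal{C}\in\mathcal{T}_{\mathcal{C}_0}$, where $S$ is the right shift on $\ell^2(\mathbb{Z})$.
   Context: For $\alpha\in\mathbb{D}=\{|z|<1\}$ let $\rho=(1-|\alpha|^2)^{1/2}$ and $\Theta(\alpha)=\begin{pmatrix}\bar\alpha&\rho\\ \rho&-\alpha\end{pmatrix}$. Given $\{\alpha_n\}_{n\in\mathbb{Z}}\subset\mathbb{D}$, the two-sided CMV matrix is $\mathcal{C}=\mathcal{L}\mathcal{M}$ on $\ell^2(\mathbb{Z})$, where $\mathcal{L}=\bigoplus_j\Theta(\alpha_{2j})$ with $\Theta(\alpha_{2j})$ acting on the coordinates $(2j,2j+1)$, and $\mathcal{M}=\bigoplus_j\Theta(\alpha_{2j-1})$ with $\Theta(\alpha_{2j-1})$ acting on the coordinates $(2j-1,2j)$; $\mathcal{C}$ is unitary. It is $p$-periodic if $\alpha_{n+p}=\alpha_n$. For periodic $\mathcal{C}_0$ with coefficients $\alpha^{(0)}_n$, define $M_n(z)=(\rho^{(0)}_n)^{-1}\begin{pmatrix}z&-\bar\alpha^{(0)}_n\\-\alpha^{(0)}_nz&1\end{pmatrix}$ and the discriminant $\Delta_{\mathcal{C}_0}(z)=\mathrm{Tr}\bigl(z^{-p/2}M_{p-1}(z)\cdots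 M_0(z)\bigr)$, a Laurent polynomial real on the unit circle; $\Delta_{\mathcal{C}_0}(\mathcal{C})$ is this Laurent polynomial applied to the unitary $\mathcal{C}$ (using $\mathcal{C}^{-1}=\mathcal{C}^*$). The isospectral torus $\mathcal{T}_{\mathcal{C}_0}$ is the set of two-sided $p$-periodic CMV matrices with the same discriminant as $\mathcal{C}_0$. $(Su)_n=u_{n-1}$. *)

From HB Require Import structures.
From mathcomp Require Import all_boot all_order all_algebra.
From mathcomp Require Import complex.
From mathcomp Require Import reals.
Set Implicit Arguments. Unset Strict Implicit. Unset Printing Implicit Defensive.
Import Order.TTheory GRing.Theory Num.Theory.
Local Open Scope ring_scope.

Section CMV.
Variable R : realType.
Local Notation C := R[i].

Definition zseq := int -> C.
Definition zop := zseq -> zseq.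

Definition in_disk (a : C) : bool := `|a| < 1.
Definition rho (a : C) : C := sqrtC (1 - `|a| ^+ 2).

Definition zparity (n : int) : bool := odd (absz n).

(* Block-diagonal operator  (+)_{m : parity m = e} Theta(alpha_m) acting on the
   coordinates (m, m+1).  Theta(a) = [[conj a, rho a], [rho a, -a]]. *)
Definition theta_op (e : bool) (alpha : int -> C) : zop :=
  fun u n =>
    if zparity n == e then
      conjc (alpha n) * u n + rho (alpha n) * u (n + 1)
    else
      rho (alpha (n - 1)) * u (n - 1) - alpha (n - 1) * u n.

(* adjoint blocks: Theta(a)^* = [[a, rho a], [rho a, -conj a]] *)
Definition theta_adj_op (e : bool) (alpha : int -> C) : zop :=
  fun u n =>
    if zparity n == e then
      alpha n * u n + rho (alpha n) * u (n + 1)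
    else
      rho (alpha (n - 1)) * u (n - 1) - conjc (alpha (n - 1)) * u n.

Definition Lop (alpha : int -> C) : zop := theta_op false alpha.
Definition Mop (alpha : int -> C) : zop := theta_op true alpha.

(* C = L M  and  C^* = C^{-1} = M^* L^* *)
Definition cmv (alpha : int -> C) : zop := fun u => Lop alpha (Mop alpha u).
Definition cmv_adj (alpha : int -> C) : zop :=
  fun u => theta_adj_op true alpha (theta_adj_op false alpha u).

(* C^j for j : int, with C^{-1} = C^* *)
Definition cmv_pow (alpha : int -> C) (j : int) : zop :=
  match j with
  | Posz k => iter k (cmv alpha)
  | Negz k => iter k.+1 (cmv_adj alpha)
  end.

Definition is_cmv_coeffs (alpha : int -> C) : Prop := forall n, in_disk (alpha n).
Definition periodic (p : nat) (alpha : int -> C) : Prop :=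
  forall n, alpha (n + p%:Z) = alpha n.

Definition transfer (a : C) : 'M[{poly C}]_2 :=
  ((rho a)^-1)%:P *: (\matrix_(i < 2, j < 2)
     (if (i == 0) && (j == 0) then 'X
      else if (i == 0) && (j == 1) then - (conjc a)%:P
      else if (i == 1) && (j == 0) then - (a *: 'X)
      else 1) : 'M[{poly C}]_2).

(* Tr(M_{p-1}(z) ... M_0(z)), a polynomial of degree <= p; the discriminant is
   Delta(z) = z^{-p/2} * disc_poly p alpha (z). *)
Definition disc_poly (p : nat) (alpha : int -> C) : {poly C} :=
  \tr (\prod_(i < p) transfer (alpha (p.-1 - i)%N%:Z)).

(* Delta_{C0}(C), the Laurent polynomial Delta applied to the unitary C:
   sum_k q_k C^(k - p/2) where q = disc_poly p alpha0. *)
Definition disc_apply (p : nat) (alpha0 alpha : int -> C) : zop :=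
  fun u n => \sum_(k < p.+1)
     (disc_poly p alpha0)`_k * cmv_pow alpha (k%:Z - (p./2)%:Z) u n.

(* S^p + S^{-p}, with (S u)_n = u_{n-1} *)
Definition shift_sum (p : nat) : zop :=
  fun u n => u (n - p%:Z) + u (n + p%:Z).

Definition in_iso_torus (p : nat) (alpha0 : int -> C) (Cop : zop) : Prop :=
  exists beta : int -> C, [/\ is_cmv_coeffs beta, periodic p beta,
     Cop = cmv beta & disc_poly p beta = disc_poly p alpha0].

End CMV.

(* Running
   the Szegő recursion from [phi_0 = phi_0^* = 1] gives a formal solution [u(z)] of
   [C u = z u]; the monodromy matrix has determinant [z^p] and trace [z^(p/2) Delta(z)], so
   Cayley-Hamilton yields [u_(n-p) + u_(n+p) = Delta(z) u_n]. Hence the banded operator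
   [Delta(C) - S^p - S^(-p)] kills every Laurent coefficient of [u]. These coefficient
   vectors are triangular on [[0, +oo)], which forces the rows [n >= p] of the operator to
   vanish, and commutation with [S^p] propagates this to every row.
   Conversely, if [Delta(C) = S^p + S^(-p)] then [C] commutes with [S^p + S^(-p)]. As [C] is
   five-diagonal with a parity-dependent zero, comparing entries next to the diagonal shows
   that they are [p]-periodic, and these entries determine the Verblunsky coefficients.
   Finally, evaluating [Delta(C) = S^p + S^(-p)] on the Laurent coefficients of [u] at [n = 0]
   identifies the coefficients of the two discriminants. *)

From HB Require Import structures.
From mathcomp Require Import all_boot all_order all_algebra.
From mathcomp Require Import complex reals zify ring.
From mathcomp Require boolp.
Import Order.TTheory GRing.Theory Num.Theory.
Local Open Scope ring_scope.
Set Implicit Arguments. Unset Strict Implicit. Unset Printing Implicit Defensive.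

Lemma zparityD (n m : int) : zparity (n + m) = zparity n (+) zparity m.
Proof. rewrite /zparity; lia. Qed.

Lemma zparityD1 (n : int) : zparity (n + 1) = ~~ zparity n.
Proof. by rewrite zparityD addbT. Qed.

Lemma zparityB1 (n : int) : zparity (n - 1) = ~~ zparity n.
Proof. by rewrite zparityD addbT. Qed.

Lemma zparityD_even (n m : int) : ~~ zparity m -> zparity (n + m) = zparity n.
Proof. by rewrite zparityD => /negbTE->; rewrite addbF. Qed.

Lemma zparityN (n : int) : zparity (- n) = zparity n.
Proof. rewrite /zparity; lia. Qed.

Section Verblunsky.
Variable R : realType.
Local Notation C := R[i].

Lemma rho_sqr_add (a : C) : rho a * rho a + a^* * a = 1.
Proof. by rewrite -expr2 sqrtCK normCK mulrC subrK. Qed.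

(* [field] modulo the relation [rho a ^ 2 + |a| ^ 2 = 1]. *)
Lemma eq_mod_rho (a x y t : C) : x - y = t * (rho a * rho a + a^* * a - 1) -> x = y.
Proof. by rewrite rho_sqr_add subrr mulr0 => /eqP; rewrite subr_eq0 => /eqP. Qed.

Lemma rho_gt0 (a : C) : in_disk a -> 0 < rho a.
Proof. by move=> a_lt1; rewrite sqrtC_gt0 subr_gt0 expr_lt1. Qed.

Lemma rho_neq0 (a : C) : in_disk a -> rho a != 0.
Proof. by move/rho_gt0; rewrite lt0r => /andP[]. Qed.

Lemma conjc_rho (a : C) : in_disk a -> (rho a)^* = rho a.
Proof. by move/rho_gt0/ltW/geC0_conj. Qed.

End Verblunsky.

Lemma iter_commute (T : Type) (f g : T -> T) :
  (forall x, f (g x) = g (f x)) -> forall k x, iter k f (g x) = g (iter k f x).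
Proof. by move=> fg; elim=> [|k IHk] x //=; rewrite IHk fg. Qed.

Section BandedOperators.
Variable R : realType.
Local Notation C := R[i].
Local Notation zseq := (zseq R).
Local Notation zop := (zop R).

Definition zlinear (F : zop) := forall (c : C) (u v : zseq) n,
  F (fun x => c * u x + v x) n = c * F u n + F v n.

Definition zlocal (r : nat) (F : zop) := forall (u v : zseq) n,
  (forall m, `|m - n| <= r%:Z -> u m = v m) -> F u n = F v n.

Definition zdelta (m : int) : zseq := fun x => if x == m then 1 else 0.

Definition zshift (s : int) (u : zseq) : zseq := fun x => u (x - s).

Lemma zlinear_fun F c u v : zlinear F ->
  F (fun x => c * u x + v x) = (fun n => c * F u n + F v n).
Proof. by move=> linF; apply: boolp.funext => n; rewrite linF. Qed.

Lemma zlinear0 F : zlinear F -> F (fun _ => 0) = (fun _ => 0).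
Proof.
move=> linF; apply: boolp.funext => n.
have -> : (fun _ => 0) = (fun x => -1 * (fun _ => 0) x + (fun _ => 0) x) :> zseq.
  by apply: boolp.funext => x; rewrite mulr0 addr0.
by rewrite linF mulN1r addNr.
Qed.

Lemma zlinear_comp F G : zlinear F -> zlinear G -> zlinear (fun u => F (G u)).
Proof. by move=> linF linG c u v n /=; rewrite zlinear_fun // linF. Qed.

Lemma zlinear_iter k F : zlinear F -> zlinear (iter k F).
Proof.
move=> linF; elim: k => [|k IHk] c u v n //=.
by rewrite zlinear_fun // linF.
Qed.

Lemma zlinear_sum F N (c : nat -> C) (g : nat -> zseq) n : zlinear F ->
  F (fun x => \sum_(i < N) c i * g i x) n = \sum_(i < N) c i * F (g i) n.
Proof.
move=> linF; elim: N => [|N IHN].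
  rewrite big_ord0 -[RHS]/((fun _ => 0) n) -(zlinear0 linF).
  by congr (F _ n); apply: boolp.funext => x; rewrite big_ord0.
rewrite big_ord_recr /= -IHN addrC -linF; congr (F _ n); apply: boolp.funext => x.
by rewrite big_ord_recr /= addrC.
Qed.

Lemma zlocal_comp r s F G : zlocal r F -> zlocal s G -> zlocal (r + s) (fun u => F (G u)).
Proof.
move=> locF locG u v n uv /=; apply: locF => m Hm; apply: locG => m' Hm'.
by apply: uv; rewrite PoszD; lia.
Qed.

Lemma zlocal_le r s F : (r <= s)%N -> zlocal r F -> zlocal s F.
Proof. by move=> rs locF u v n uv; apply: locF => m Hm; apply: uv; lia. Qed.

Lemma zlocal_iter r k F : zlocal r F -> zlocal (k * r) (iter k F).
Proof.
move=> locF; elim: k => [|k IHk] u v n uv /=; first by apply: uv; lia.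
by apply: (zlocal_comp locF IHk) => m Hm; apply: uv; rewrite mulSn.
Qed.

Lemma zseq_window (u : zseq) (n : int) (r : nat) x : `|x - n| <= r%:Z ->
  u x = \sum_(i < (2 * r).+1) u (n - r%:Z + i%:Z) * zdelta (n - r%:Z + i%:Z) x.
Proof.
move=> xn; have ix : (absz (x - n + r%:Z)%R < (2 * r).+1)%N by lia.
rewrite (bigD1 (Ordinal ix)) //= big1 ?addr0 => [|i /eqP ix'].
  by rewrite /zdelta (_ : n - r%:Z + _ = x) ?eqxx ?mulr1 //; lia.
rewrite /zdelta; case: eqP => [xi|]; last by rewrite mulr0.
by case: ix'; apply: val_inj => /=; lia.
Qed.

Lemma zlocal_linear_expand r F u n : zlinear F -> zlocal r F ->
  F u n = \sum_(i < (2 * r).+1) u (n - r%:Z + i%:Z) * F (zdelta (n - r%:Z + i%:Z)) n.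
Proof.
move=> linF locF.
rewrite -(@zlinear_sum F _ (fun i => u (n - r%:Z + i%:Z)) (fun i => zdelta (n - r%:Z + i%:Z))) //.
by apply: locF => m Hm; apply: zseq_window.
Qed.

Variable a : int -> C.

Lemma theta_op_linear e : zlinear (theta_op e a).
Proof. by move=> c u v n; rewrite /theta_op; case: ifP => _; ring. Qed.

Lemma theta_adj_op_linear e : zlinear (theta_adj_op e a).
Proof. by move=> c u v n; rewrite /theta_adj_op; case: ifP => _; ring. Qed.

Lemma theta_op_local e : zlocal 1 (theta_op e a).
Proof. by move=> u v n uv; rewrite /theta_op !uv //; lia. Qed.

Lemma theta_adj_op_local e : zlocal 1 (theta_adj_op e a).
Proof. by move=> u v n uv; rewrite /theta_adj_op !uv //; lia. Qed.

Lemma cmv_linear : zlinear (cmv a).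
Proof. exact: zlinear_comp (theta_op_linear _) (theta_op_linear _). Qed.

Lemma cmv_adj_linear : zlinear (cmv_adj a).
Proof. exact: zlinear_comp (theta_adj_op_linear _) (theta_adj_op_linear _). Qed.

Lemma cmv_local : zlocal 2 (cmv a).
Proof. exact: zlocal_comp (theta_op_local _) (theta_op_local _). Qed.

Lemma cmv_adj_local : zlocal 2 (cmv_adj a).
Proof. exact: zlocal_comp (theta_adj_op_local _) (theta_adj_op_local _). Qed.

Lemma cmv_pow_linear j : zlinear (cmv_pow a j).
Proof. by case: j => k; apply: zlinear_iter; [exact: cmv_linear|exact: cmv_adj_linear]. Qed.

Lemma cmv_pow_local j : zlocal (2 * absz j) (cmv_pow a j).
Proof.
by case: j => k /=; rewrite mulnC; apply: zlocal_iter; [exact: cmv_local|exact: cmv_adj_local].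
Qed.

Lemma theta_opK e : cancel (theta_op e a) (theta_adj_op e a).
Proof.
move=> u; apply: boolp.funext => n; rewrite /theta_adj_op /theta_op.
rewrite zparityD1 zparityB1 addrK subrK.
case: e; case: (zparity n) => /=;
  first [apply: (eq_mod_rho (a := a n) (t := u n)); ring
        |apply: (eq_mod_rho (a := a (n - 1)) (t := u n)); ring].
Qed.

Lemma theta_adj_opK e : cancel (theta_adj_op e a) (theta_op e a).
Proof.
move=> u; apply: boolp.funext => n; rewrite /theta_adj_op /theta_op.
rewrite zparityD1 zparityB1 addrK subrK.
case: e; case: (zparity n) => /=;
  first [apply: (eq_mod_rho (a := a n) (t := u n)); ring
        |apply: (eq_mod_rho (a := a (n - 1)) (t := u n)); ring].
Qed.

End BandedOperators.

Arguments zdelta {R}.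

Ltac decide_int_eqs := repeat match goal with |- context [@eq_op ?T ?x ?y] =>
   first [ rewrite (_ : (x == y) = true); last by lia
         | rewrite (_ : (x == y) = false); last by lia ] end.

Section CMVOperator.
Variable R : realType.
Local Notation C := R[i].
Variable a : int -> C.

Lemma cmvK : cancel (cmv a) (cmv_adj a).
Proof. by move=> u; rewrite /cmv_adj /cmv /Lop /Mop !theta_opK. Qed.

Lemma cmv_adjK : cancel (cmv_adj a) (cmv a).
Proof. by move=> u; rewrite /cmv_adj /cmv /Lop /Mop !theta_adj_opK. Qed.

Lemma cmv_pow_cmv j u : cmv_pow a j (cmv a u) = cmv a (cmv_pow a j u).
Proof.
case: j => k; rewrite /cmv_pow; first by rewrite -iterSr -iterS.
by rewrite iterSr cmvK iterS cmv_adjK.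
Qed.

Variable p : nat.
Hypothesis p_even : ~~ odd p.
Hypothesis a_per : periodic p a.

Lemma zparityBp (n : int) : zparity (n - p%:Z) = zparity n.
Proof. by apply: zparityD_even; rewrite zparityN. Qed.

Lemma periodicB (n : int) : a (n - p%:Z) = a n.
Proof. by rewrite -a_per subrK. Qed.

Lemma theta_op_zshift e u : theta_op e a (zshift p%:Z u) = zshift p%:Z (theta_op e a u).
Proof.
apply: boolp.funext => n.
by rewrite /zshift /theta_op zparityBp !(addrAC n (- p%:Z)) !periodicB.
Qed.

Lemma theta_adj_op_zshift e u :
  theta_adj_op e a (zshift p%:Z u) = zshift p%:Z (theta_adj_op e a u).
Proof.
apply: boolp.funext => n.
by rewrite /zshift /theta_adj_op zparityBp !(addrAC n (- p%:Z)) !periodicB.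
Qed.

Lemma cmv_pow_zshift j u : cmv_pow a j (zshift p%:Z u) = zshift p%:Z (cmv_pow a j u).
Proof.
case: j => k; rewrite /cmv_pow; apply: iter_commute => v.
  by rewrite /cmv /Lop /Mop !theta_op_zshift.
by rewrite /cmv_adj !theta_adj_op_zshift.
Qed.

End CMVOperator.

Section CMVEntries.
Variable R : realType.
Local Notation C := R[i].
Variable a : int -> C.

Definition cmv_entry (n m : int) : C := cmv a (zdelta m) n.

Lemma cmv_entry_far n m : 2 < `|m - n| -> cmv_entry n m = 0.
Proof.
move=> far; rewrite /cmv_entry -[RHS]/((fun _ => 0) n) -(zlinear0 (cmv_linear a)).
apply: cmv_local => x xn; rewrite /zdelta; case: eqP => // xm; lia.
Qed.

Lemma cmv_entry_even_subn2 n : ~~ zparity n -> cmv_entry n (n - 2) = 0.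
Proof.
rewrite /cmv_entry /cmv /Lop /Mop /theta_op /zdelta /zparity => /negbTE npar; rewrite npar.
by decide_int_eqs; ring.
Qed.

Lemma cmv_entry_even_addn2 n : ~~ zparity n ->
  cmv_entry n (n + 2) = rho (a n) * rho (a (n + 1)).
Proof.
rewrite /cmv_entry /cmv /Lop /Mop /theta_op /zdelta /zparity => /negbTE npar; rewrite npar.
by decide_int_eqs; ring.
Qed.

Lemma cmv_entry_odd_subn2 n : zparity n ->
  cmv_entry n (n - 2) = rho (a (n - 1)) * rho (a (n - 2)).
Proof.
rewrite /cmv_entry /cmv /Lop /Mop /theta_op /zdelta /zparity => npar; rewrite npar.
by decide_int_eqs; rewrite (_ : n - 1 - 1 = n - 2); [ring | lia].
Qed.

Lemma cmv_entry_odd_subn1 n : zparity n ->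
  cmv_entry n (n - 1) = - (rho (a (n - 1)) * a (n - 2)).
Proof.
rewrite /cmv_entry /cmv /Lop /Mop /theta_op /zdelta /zparity => npar; rewrite npar.
by decide_int_eqs; rewrite (_ : n - 1 - 1 = n - 2); [ring | lia].
Qed.

Lemma cmv_entry_odd_addn1 n : zparity n ->
  cmv_entry n (n + 1) = - (a (n - 1) * rho (a n)).
Proof.
rewrite /cmv_entry /cmv /Lop /Mop /theta_op /zdelta /zparity => npar; rewrite npar.
by decide_int_eqs; ring.
Qed.

End CMVEntries.

Section TwoByTwo.
Variable K : comNzRingType.
Implicit Types A B : 'M[K]_2.

Lemma ord2_ind (P : 'I_2 -> Prop) : P 0 -> P 1 -> forall i, P i.
Proof.
move=> P0 P1 i; have : (i == 0) || (i == 1) by case: i => [[|[|m]]].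
by case/orP => /eqP ->.
Qed.

Lemma mxtrace_mx22 A : \tr A = A 0 0 + A 1 1.
Proof.
rewrite /mxtrace !big_ord_recl big_ord0 addr0.
by rewrite (_ : lift ord0 ord0 = 1 :> 'I_2) //; apply: val_inj.
Qed.

Lemma mul_mx22E A B i j : (A * B) i j = A i 0 * B 0 j + A i 1 * B 1 j.
Proof.
rewrite -mulmxE mxE !big_ord_recl big_ord0 addr0.
by rewrite (_ : lift ord0 ord0 = 1 :> 'I_2) //; apply: val_inj.
Qed.

Lemma det_mx22 A : \det A = A 0 0 * A 1 1 - A 0 1 * A 1 0.
Proof.
rewrite (expand_det_row _ 0) !big_ord_recl big_ord0 addr0 /cofactor !det_mx11 !mxE /=.
have l01 : lift 0 (0 : 'I_1) = 1 :> 'I_2 by apply: val_inj.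
have l11 : lift ord0 ord0 = 1 :> 'I_2 by apply: val_inj.
have l10 : lift 1 (0 : 'I_1) = 0 :> 'I_2 by apply: val_inj.
by rewrite ?l01 ?l11 ?l10 expr0 expr1 /=; ring.
Qed.

Lemma mx22_Cayley_Hamilton A : A * A = \tr A *: A - \det A *: 1.
Proof.
apply/matrixP; do 2![apply: ord2_ind];
  by rewrite mul_mx22E mxtrace_mx22 det_mx22 !mxE /=; ring.
Qed.

End TwoByTwo.

Lemma mxtrace_intertwine (K : idomainType) n (A B M : 'M[K]_n) :
  \det M != 0 -> A *m M = M *m B -> \tr A = \tr B.
Proof.
move=> detM AM; apply: (mulIf detM).
rewrite mulrC [RHS]mulrC -!mxtraceZ -!mul_mx_scalar -[in LHS]mul_mx_adj -mul_adj_mx.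
by rewrite mulmxA AM -mulmxA mxtrace_mulC -mulmxA.
Qed.

Section PolynomialConvolution.
Variable K : comNzRingType.
Implicit Types (P Q : {poly K}) (f g : int -> K) (k : int) (c : K).

(* The coefficients of [P(z) f(z)] for a formal Laurent series [f] with coefficients [f k]. *)
Definition pconv P f : int -> K := fun k => \sum_(i < size P) P`_i * f (k - i%:Z).

Lemma pconv_widen P f k N : (size P <= N)%N ->
  pconv P f k = \sum_(i < N) P`_i * f (k - i%:Z).
Proof.
move=> PN; rewrite /pconv (big_ord_widen N (fun i => P`_i * f (k - i%:Z))) //.
rewrite [RHS](bigID (fun i : 'I_N => (i < size P)%N)) /=.
by rewrite [X in _ = _ + X]big1 ?addr0 // => i; rewrite -leqNgt => /(nth_default 0)->;
  rewrite mul0r.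
Qed.

Lemma pconvDl P Q f k : pconv (P + Q) f k = pconv P f k + pconv Q f k.
Proof.
pose N := maxn (size P) (size Q).
rewrite !(@pconv_widen _ _ _ N) ?leq_maxl ?leq_maxr ?size_polyD //.
by rewrite -big_split; apply: eq_bigr => i _; rewrite coefD mulrDl.
Qed.

Lemma pconvNl P f k : pconv (- P) f k = - pconv P f k.
Proof. by rewrite /pconv size_polyN -sumrN; apply: eq_bigr => i _; rewrite coefN mulNr. Qed.

Lemma pconvBl P Q f k : pconv (P - Q) f k = pconv P f k - pconv Q f k.
Proof. by rewrite pconvDl pconvNl. Qed.

Lemma pconvC c f k : pconv c%:P f k = c * f k.
Proof. by rewrite (@pconv_widen _ _ _ 1) ?size_polyC_leq1 // big_ord1 coefC subr0. Qed.

Lemma pconv0 f k : pconv 0 f k = 0.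
Proof. by rewrite /pconv size_poly0 big_ord0. Qed.

Lemma pconv1 f k : pconv 1 f k = f k.
Proof. by rewrite -polyC1 pconvC mul1r. Qed.

Lemma pconvXn (n : nat) f k : pconv 'X^n f k = f (k - n%:Z).
Proof.
rewrite (@pconv_widen _ _ _ n.+1) ?size_polyXn // big_ord_recr /= big1 ?add0r.
  by rewrite coefXn eqxx mul1r.
by move=> i _; rewrite coefXn ltn_eqF ?mul0r.
Qed.

Lemma pconvX f k : pconv 'X f k = f (k - 1).
Proof. by rewrite -['X]expr1 pconvXn. Qed.

Lemma pconvDr P f g k : pconv P (fun x => f x + g x) k = pconv P f k + pconv P g k.
Proof. by rewrite /pconv -big_split; apply: eq_bigr => i _; rewrite mulrDr. Qed.

Lemma pconvMX P f k : pconv (P * 'X) f k = pconv P (fun x => f (x - 1)) k.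
Proof.
have sizePX : (size (P * 'X)%R <= (size P).+1)%N.
  by rewrite (leq_trans (size_polyMleq P 'X)) // size_polyX addn2.
rewrite (pconv_widen _ _ sizePX) big_ord_recl coefMX /= mul0r add0r.
by apply: eq_bigr => i _; rewrite coefMX /= -addrA -opprD -PoszD addn1.
Qed.

Lemma pconvMC P c f k : pconv (P * c%:P) f k = pconv P (fun x => c * f x) k.
Proof.
rewrite (@pconv_widen _ _ _ (size P)); last by rewrite mulrC mul_polyC size_scale_leq.
by apply: eq_bigr => i _; rewrite coefMC mulrA.
Qed.

Lemma pconvM P Q f k : pconv (P * Q) f k = pconv P (pconv Q f) k.
Proof.
elim/poly_ind: Q f k => [|Q c IHQ] f k.
  by rewrite mulr0 pconv0 /pconv big1 // => i _; rewrite size_poly0 big_ord0 mulr0.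
rewrite mulrDr mulrA pconvDl pconvMX IHQ pconvMC -pconvDr.
by congr pconv; apply: boolp.funext => x; rewrite pconvDl pconvMX pconvC.
Qed.

Definition mxact (A : 'M[{poly K}]_2) (F : (int -> K) * (int -> K)) :=
  (fun k => pconv (A 0 0) F.1 k + pconv (A 0 1) F.2 k,
   fun k => pconv (A 1 0) F.1 k + pconv (A 1 1) F.2 k).

Lemma mxactM A B F : mxact (A * B) F = mxact A (mxact B F).
Proof.
by congr pair; apply: boolp.funext => k;
  rewrite !mul_mx22E !pconvDl !pconvM !pconvDr; ring.
Qed.

Lemma mxact1 F : mxact 1 F = F.
Proof.
by case: F => f g; congr pair; apply: boolp.funext => k;
  rewrite !mxE /= pconv1 pconv0 ?addr0 ?add0r.
Qed.

Lemma mxact_sqr A F : mxact A (mxact A F) =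
  (fun k => pconv (\tr A) (mxact A F).1 k - pconv (\det A) F.1 k,
   fun k => pconv (\tr A) (mxact A F).2 k - pconv (\det A) F.2 k).
Proof.
rewrite -mxactM mx22_Cayley_Hamilton; congr pair; apply: boolp.funext => k;
by rewrite !mxE /= ?mulr1 ?mulr0 ?subr0 !pconvBl !pconvM ?pconv0 !pconvDr; ring.
Qed.

End PolynomialConvolution.

Lemma size_prod_mx22_le (K : comNzRingType) (m : nat) (F : nat -> 'M[{poly K}]_2) :
  (forall k i j, (size (F k i j) <= 2)%N) ->
  forall i j, (size ((\prod_(k < m) F k)%R i j) <= m.+1)%N.
Proof.
move=> sizeF; elim: m => [|m IHm] i j.
  by rewrite big_ord0 mxE; case: (i == j); rewrite ?size_poly1 ?size_poly0.
have sizeM x y : (x <= m.+1)%N -> (y <= 2)%N -> ((x + y).-1 <= m.+2)%N by lia.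
rewrite big_ord_recr /= mul_mx22E (leq_trans (size_polyD _ _)) // geq_max.
by apply/andP; split; rewrite (leq_trans (size_polyMleq _ _)) // sizeM.
Qed.

Section Transfer.
Variable R : realType.
Local Notation C := R[i].

Lemma size_transfer_le (b : C) i j : (size (transfer b i j) <= 2)%N.
Proof.
rewrite /transfer !mxE mul_polyC (leq_trans (size_scale_leq _ _)) //.
move: i j; do 2![apply: ord2_ind] => /=.
- by rewrite size_polyX.
- by rewrite size_polyN (leq_trans (size_polyC_leq1 _)).
- by rewrite size_polyN (leq_trans (size_scale_leq _ _)) ?size_polyX.
- by rewrite size_poly1.
Qed.

Lemma size_disc_poly (p : nat) (a : int -> C) : (size (disc_poly p a) <= p.+1)%N.
Proof.
rewrite /disc_poly mxtrace_mx22 (leq_trans (size_polyD _ _)) // geq_max.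
by apply/andP; split; apply: (@size_prod_mx22_le _ _ (fun k => transfer (a (p.-1 - k)%N%:Z)))
  => k; apply: size_transfer_le.
Qed.

Lemma det_transfer (b : C) : in_disk b -> \det (transfer b) = 'X.
Proof.
move=> b_lt1; rewrite det_mx22 /transfer !mxE /= -mul_polyC.
have r_neq0 := rho_neq0 b_lt1.
transitivity (((rho b)^-1 * (rho b)^-1 * (1 - b^* * b))%:P * 'X).
  by rewrite !(polyCM, polyCB, polyC1); ring.
have -> : (rho b)^-1 * (rho b)^-1 * (1 - b^* * b) = 1.
  by rewrite -{1}(rho_sqr_add b) addrK; field.
by rewrite polyC1 mul1r.
Qed.

End Transfer.

Section Szego.
Variable R : realType.
Local Notation C := R[i].
Local Notation zseq := (zseq R).
Variable a : int -> C.
Hypothesis a_disk : is_cmv_coeffs a.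

(* Coefficient sequences of the Szegő recursion
   [(phi_(n+1), phi_(n+1)^* ) = transfer (a n) (phi_n, phi_n^* )], run in both directions from
   [phi_0 = phi_0^* = 1]. *)
Definition szego_step (n : int) (F : zseq * zseq) : zseq * zseq :=
  (fun k => (rho (a n))^-1 * (F.1 (k - 1) - (a n)^* * F.2 k),
   fun k => (rho (a n))^-1 * (F.2 k - a n * F.1 (k - 1))).

Definition szego_back (n : int) (F : zseq * zseq) : zseq * zseq :=
  (fun k => (rho (a n))^-1 * (F.1 (k + 1) + (a n)^* * F.2 (k + 1)),
   fun k => (rho (a n))^-1 * (a n * F.1 k + F.2 k)).

Fixpoint szego_fwd (m : nat) : zseq * zseq :=
  if m is m'.+1 then szego_step m' (szego_fwd m') else (zdelta 0, zdelta 0).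

Fixpoint szego_bwd (m : nat) : zseq * zseq :=
  if m is m'.+1 then szego_back (Negz m') (szego_bwd m') else (zdelta 0, zdelta 0).

Definition szego (n : int) : zseq * zseq :=
  match n with Posz m => szego_fwd m | Negz m => szego_bwd m.+1 end.

Lemma szego_backK n F : szego_step n (szego_back n F) = F.
Proof.
case: F => f g; have r_neq0 := rho_neq0 (a_disk n).
congr pair; apply: boolp.funext => k; rewrite /= subrK.
  by apply: (eq_mod_rho (t := - ((rho (a n))^-1 * (rho (a n))^-1 * f k))); field.
by apply: (eq_mod_rho (t := - ((rho (a n))^-1 * (rho (a n))^-1 * g k))); field.
Qed.

Lemma szegoD1 n : szego (n + 1) = szego_step n (szego n).
Proof.
case: n => [m|[|m]]; first by rewrite -PoszD addn1.
  by rewrite /= szego_backK.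
by rewrite (_ : Negz m.+1 + 1 = Negz m) /= ?szego_backK //; lia.
Qed.

Lemma szegoB1 n : szego n = szego_step (n - 1) (szego (n - 1)).
Proof. by rewrite -szegoD1 subrK. Qed.

Lemma szego_step_mxact n F : szego_step n F = mxact (transfer (a n)) F.
Proof.
rewrite /szego_step /mxact /transfer !mxE /=; congr pair; apply: boolp.funext => k;
by rewrite -?mul_polyC !(pconvDl, pconvM, pconvNl, pconvC, pconvX, pconv1); ring.
Qed.

Lemma szego_prod n (m : nat) :
  szego (n + m%:Z) = mxact (\prod_(i < m) transfer (a (n + (m%:Z - 1 - i%:Z)))) (szego n).
Proof.
elim: m => [|m IHm]; first by rewrite big_ord0 mxact1 addr0.
rewrite (_ : n + m.+1%:Z = n + m%:Z + 1); last lia.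
rewrite szegoD1 szego_step_mxact IHm -mxactM big_ord_recl.
congr (mxact (transfer (a _) * _) _); first by rewrite /=; lia.
by apply: eq_bigr => i _; congr (transfer (a _)); rewrite lift0; lia.
Qed.

(* [eigcoef k] is the [z^k]-coefficient of the formal solution [u] of [C u = z u] with
   [u_n = z^(-n/2) phi_n] for even [n] and [u_n = z^(-(n+1)/2) phi_n^*] for odd [n]. *)
Definition eigcoef (k n : int) : C :=
  if zparity n then (szego n).2 (k + (n %/ 2)%Z + 1) else (szego n).1 (k + (n %/ 2)%Z).

Lemma Mop_eigcoef k : Mop a (eigcoef k) = theta_adj_op false a (eigcoef (k - 1)).
Proof.
apply: boolp.funext => n; rewrite /Mop /theta_op /theta_adj_op /eigcoef.
rewrite zparityD1 zparityB1 (szegoD1 n) (szegoB1 n) /=.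
have r_neq0 := rho_neq0 (a_disk n); have r'_neq0 := rho_neq0 (a_disk (n - 1)).
case: (boolP (zparity n)) => n_par /=.
  have -> : ((n + 1) %/ 2)%Z = (n %/ 2)%Z + 1 by move: n_par; rewrite /zparity; lia.
  have -> : ((n - 1) %/ 2)%Z = (n %/ 2)%Z by move: n_par; rewrite /zparity; lia.
  set m := (n %/ 2)%Z.
  rewrite (addrA k) (_ : k - 1 + m = k + m + 1 - 1 - 1) ?subrK; last lia.
  apply: (eq_mod_rho (a := a (n - 1))
    (t := - ((rho (a (n - 1)))^-1 * (szego (n - 1)).1 (k + m + 1 - 1 - 1)))).
  by field; rewrite r_neq0 r'_neq0.
have -> : ((n + 1) %/ 2)%Z = (n %/ 2)%Z by move: n_par; rewrite /zparity; lia.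
have -> : ((n - 1) %/ 2)%Z = (n %/ 2)%Z - 1 by move: n_par; rewrite /zparity; lia.
set m := (n %/ 2)%Z.
rewrite (addrA k) subrK (_ : k - 1 + m = k + m - 1) ?subrK; last lia.
apply: (eq_mod_rho (a := a (n - 1)) (t := (rho (a (n - 1)))^-1 * (szego (n - 1)).2 (k + m))).
by field; rewrite r_neq0 r'_neq0.
Qed.

Lemma cmv_eigcoef k : cmv a (eigcoef k) = eigcoef (k - 1).
Proof. by rewrite /cmv Mop_eigcoef /Lop theta_adj_opK. Qed.

Lemma cmv_adj_eigcoef k : cmv_adj a (eigcoef k) = eigcoef (k + 1).
Proof. by rewrite /cmv_adj -{1}(addrK 1 k) -Mop_eigcoef /Mop theta_opK. Qed.

Lemma cmv_pow_eigcoef j k : cmv_pow a j (eigcoef k) = eigcoef (k - j).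
Proof.
have iter_eigcoef F s : (forall i, F (eigcoef i) = eigcoef (i + s)) ->
    forall (m : nat) i, iter m F (eigcoef i) = eigcoef (i + s * m%:Z).
  by move=> Fs; elim=> [|m IHm] i /=; rewrite ?mulr0 ?addr0 // IHm Fs; congr eigcoef; lia.
case: j => m; rewrite /cmv_pow.
  by rewrite (@iter_eigcoef _ (-1)) => [|i]; [congr eigcoef; lia | rewrite cmv_eigcoef].
by rewrite (@iter_eigcoef _ 1) => [|i]; [congr eigcoef; lia | rewrite cmv_adj_eigcoef].
Qed.

Lemma disc_apply_eigcoef (p : nat) (a0 : int -> C) k n :
  disc_apply p a0 a (eigcoef k) n =
  \sum_(i < p.+1) (disc_poly p a0)`_i * eigcoef (k - (i%:Z - (p./2)%:Z)) n.
Proof. by apply: eq_bigr => i _; rewrite cmv_pow_eigcoef. Qed.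

End Szego.

Section Floquet.
Variable R : realType.
Local Notation C := R[i].
Variable a : int -> C.
Hypothesis a_disk : is_cmv_coeffs a.
Variable p : nat.
Hypothesis p_even : ~~ odd p.
Hypothesis a_per : periodic p a.

Definition monodromy (n : int) := \prod_(i < p) transfer (a (n + (p%:Z - 1 - i%:Z))).

Lemma monodromyDp n : monodromy (n + p%:Z) = monodromy n.
Proof.
apply: eq_bigr => i _; congr transfer.
by rewrite (_ : n + p%:Z + _ = n + (p%:Z - 1 - i%:Z) + p%:Z) ?a_per //; lia.
Qed.

Lemma monodromy_intertwine n :
  monodromy (n + 1) * transfer (a n) = transfer (a n) * monodromy n.
Proof.
pose G (i : 'I_p.+1) := transfer (a (n + (p%:Z - i%:Z))).
transitivity (\prod_(i < p.+1) G i).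
  rewrite big_ord_recr /=; congr (_ * _); last by rewrite /G /=; congr (transfer (a _)); lia.
  by apply: eq_bigr => i _; rewrite /G /=; congr (transfer (a _)); lia.
rewrite big_ord_recl /= /G subr0 a_per; congr (_ * _).
by apply: eq_bigr => i _; congr (transfer (a _)); rewrite lift0; lia.
Qed.

Lemma mxtrace_monodromy n : \tr (monodromy n) = disc_poly p a.
Proof.
have trDn (m : nat) j : \tr (monodromy (j + m%:Z)) = \tr (monodromy j).
  elim: m => [|m IHm]; first by rewrite addr0.
  rewrite (_ : j + m.+1%:Z = j + m%:Z + 1); last lia.
  rewrite -IHm; apply: (mxtrace_intertwine (M := transfer (a (j + m%:Z)))).
    by rewrite det_transfer // polyX_eq0.
  by rewrite !mulmxE monodromy_intertwine.
have -> : \tr (monodromy n) = \tr (monodromy 0).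
  have [n_ge0 | n_lt0] := lerP 0 n.
    by rewrite (_ : n = 0 + (absz n)%:Z); [exact: trDn | lia].
  by rewrite [in RHS](_ : 0 = n + (absz n)%:Z); [symmetry; exact: trDn | lia].
rewrite /disc_poly; congr mxtrace; apply: eq_bigr => i _; congr (transfer (a _)).
by have := ltn_ord i; lia.
Qed.

Lemma det_monodromy n : \det (monodromy n) = 'X^p.
Proof.
rewrite /monodromy (big_morph _ (@detM _ 1) (@det1 _ 2)).
by rewrite (eq_bigr (fun _ => 'X)) ?prodr_const ?card_ord // => i _; rewrite det_transfer.
Qed.

Lemma szego_floquet n : szego a (n + p%:Z + p%:Z) =
  (fun k => pconv (disc_poly p a) (szego a (n + p%:Z)).1 k - (szego a n).1 (k - p%:Z),
   fun k => pconv (disc_poly p a) (szego a (n + p%:Z)).2 k - (szego a n).2 (k - p%:Z)).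
Proof.
have szegoDp m : szego a (m + p%:Z) = mxact (monodromy m) (szego a m).
  exact: szego_prod.
rewrite szegoDp monodromyDp szegoDp mxact_sqr mxtrace_monodromy det_monodromy.
by congr pair; apply: boolp.funext => k; rewrite pconvXn.
Qed.

Lemma eigcoef_floquet k n : eigcoef a k (n - p%:Z) + eigcoef a k (n + p%:Z) =
  \sum_(i < p.+1) (disc_poly p a)`_i * eigcoef a (k - (i%:Z - (p./2)%:Z)) n.
Proof.
have p_half : p = (2 * p./2)%N by rewrite -{1}(odd_double_half p) (negbTE p_even) -mul2n.
have halfDp : ((n + p%:Z) %/ 2)%Z = (n %/ 2)%Z + (p./2)%:Z by lia.
have halfBp : ((n - p%:Z) %/ 2)%Z = (n %/ 2)%Z - (p./2)%:Z by lia.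
have := szego_floquet (n - p%:Z); rewrite subrK => szegoDp.
rewrite /eigcoef zparityD_even ?zparityD_even ?zparityN // halfDp halfBp szegoDp /=.
rewrite !(pconv_widen _ _ (size_disc_poly p a)); set m := (n %/ 2)%Z; set h := (p./2)%:Z.
case: (zparity n).
  rewrite (_ : k + (m + h) + 1 - p%:Z = k + (m - h) + 1) 1?addrC ?subrK; last lia.
  by apply: eq_bigr => i _; congr (_ * (szego a n).2 _); lia.
rewrite (_ : k + (m + h) - p%:Z = k + (m - h)) 1?addrC ?subrK; last lia.
by apply: eq_bigr => i _; congr (_ * (szego a n).1 _); lia.
Qed.

End Floquet.

Section EigcoefFree.
Variable R : realType.
Local Notation C := R[i].
Variable a : int -> C.
Hypothesis a_disk : is_cmv_coeffs a.

Lemma szego_fwd_out (m : nat) (k : int) : k < 0 \/ m%:Z < k ->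
  (szego_fwd a m).1 k = 0 /\ (szego_fwd a m).2 k = 0.
Proof.
elim: m k => [|m IHm] k k_out /=; first by rewrite /zdelta; case: eqP => // k0; lia.
have [-> _] := IHm (k - 1) ltac:(lia); have [_ ->] := IHm k ltac:(lia).
by split; ring.
Qed.

Lemma szego_fwd_lead_neq0 (m : nat) : (szego_fwd a m).1 m%:Z != 0.
Proof.
elim: m => [|m IHm] /=; first by rewrite /zdelta eqxx oner_neq0.
have [_ ->] := @szego_fwd_out m m.+1 ltac:(lia).
rewrite (_ : Posz m.+1 - 1 = m) ?mulr0 ?subr0 ?mulf_neq0 ?invr_neq0 ?rho_neq0 //; lia.
Qed.

Lemma szego_fwd_const_neq0 (m : nat) : (szego_fwd a m).2 0 != 0.
Proof.
elim: m => [|m IHm] /=; first by rewrite /zdelta eqxx oner_neq0.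
have [-> _] := @szego_fwd_out m (0 - 1) ltac:(lia).
by rewrite mulr0 subr0 mulf_neq0 ?invr_neq0 ?rho_neq0.
Qed.

Lemma eigcoef_nat k (m : nat) : eigcoef a k m%:Z =
  if odd m then (szego_fwd a m).2 (k + (m./2)%:Z + 1) else (szego_fwd a m).1 (k + (m./2)%:Z).
Proof. by rewrite /eigcoef /zparity (_ : ((m%:Z) %/ 2)%Z = (m./2)%:Z) //; lia. Qed.

(* Row of the pivot of column [m >= 0] in the triangular array [eigcoef k m]. *)
Definition eigcoef_pivot (m : nat) : int :=
  if odd m then - ((m.+1)./2)%:Z else (m./2)%:Z.

Lemma eigcoef_pivot_neq0 (m : nat) : eigcoef a (eigcoef_pivot m) m%:Z != 0.
Proof.
rewrite eigcoef_nat /eigcoef_pivot; case: (boolP (odd m)) => m_odd.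
  by rewrite (_ : - ((m.+1)./2)%:Z + (m./2)%:Z + 1 = 0) ?szego_fwd_const_neq0 //; lia.
by rewrite (_ : (m./2)%:Z + (m./2)%:Z = m%:Z) ?szego_fwd_lead_neq0 //; lia.
Qed.

Lemma eigcoef_pivot_lt (m m' : nat) : (m' < m)%N -> eigcoef a (eigcoef_pivot m) m'%:Z = 0.
Proof.
move=> m'm; rewrite eigcoef_nat /eigcoef_pivot.
set h := (m'./2)%:Z; set j := (m./2)%:Z; set j' := - ((m.+1)./2)%:Z.
case: (boolP (odd m)) => m_odd; case: (boolP (odd m')) => m'_odd.
- by have [_ ->] := @szego_fwd_out m' (j' + h + 1) ltac:(lia).
- by have [-> _] := @szego_fwd_out m' (j' + h) ltac:(lia).
- by have [_ ->] := @szego_fwd_out m' (j + h + 1) ltac:(lia).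
- by have [-> _] := @szego_fwd_out m' (j + h) ltac:(lia).
Qed.

Lemma eigcoef_free (n0 L : nat) (e : nat -> C) :
  (forall k, \sum_(i < L) eigcoef a k (n0 + i)%N%:Z * e i = 0) ->
  forall i, (i < L)%N -> e i = 0.
Proof.
elim: L => [|L IHL] eigc0 i iL //.
have eL : e L = 0.
  have := eigc0 (eigcoef_pivot (n0 + L)); rewrite big_ord_recr /= big1 ?add0r.
    by move/eqP; rewrite mulf_eq0 (negbTE (eigcoef_pivot_neq0 _)) => /eqP.
  by move=> j _; rewrite eigcoef_pivot_lt ?mul0r // ltn_add2l.
have [iL'|Li|->//] := ltngtP i L; last by exfalso; lia.
by apply: IHL => // k; have := eigc0 k; rewrite big_ord_recr /= eL mulr0 addr0.
Qed.

End EigcoefFree.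

Section PeriodicDiscriminant.
Variable R : realType.
Local Notation C := R[i].
Local Notation zseq := (zseq R).
Variable b : int -> C.
Hypothesis b_disk : is_cmv_coeffs b.
Variable p : nat.
Hypothesis p_gt0 : (0 < p)%N.
Hypothesis p_even : ~~ odd p.
Hypothesis b_per : periodic p b.

Definition disc_defect (u : zseq) (n : int) : C := disc_apply p b b u n - shift_sum p u n.

Lemma disc_defect_linear : zlinear disc_defect.
Proof.
move=> c u v n; rewrite /disc_defect /disc_apply /shift_sum.
under eq_bigr => i _ do rewrite cmv_pow_linear mulrDr mulrCA.
by rewrite big_split -mulr_sumr /=; ring.
Qed.

Lemma disc_defect_local : zlocal p disc_defect.
Proof.
move=> u v n uv; rewrite /disc_defect /shift_sum !uv; try lia.
congr (_ - _); apply: eq_bigr => i _; congr (_ * _).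
have loc_i : zlocal p (cmv_pow b (i%:Z - (p./2)%:Z)).
  by apply: (zlocal_le _ (@cmv_pow_local _ b _)); have := ltn_ord i; lia.
exact: loc_i.
Qed.

Lemma disc_defect_eigcoef k n : disc_defect (eigcoef b k) n = 0.
Proof.
by rewrite /disc_defect disc_apply_eigcoef // -(eigcoef_floquet b_disk p_even b_per) subrr.
Qed.

(* For [n >= p] the band of row [n] lies in [[0, +oo)], where the columns of [eigcoef]
   are linearly independent. *)
Lemma disc_defect_ge u n : p%:Z <= n -> disc_defect u n = 0.
Proof.
move=> pn; have [n0 n0E] : exists n0 : nat, n - p%:Z = n0%:Z by exists (absz (n - p%:Z)); lia.
rewrite (zlocal_linear_expand u n disc_defect_linear disc_defect_local) big1 // => i _.
rewrite (@eigcoef_free _ b b_disk n0 (2 * p).+1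
  (fun i => disc_defect (zdelta (n - p%:Z + i%:Z)) n)) ?mulr0 // => k.
rewrite -[RHS](disc_defect_eigcoef k n).
rewrite (zlocal_linear_expand (eigcoef b k) n disc_defect_linear disc_defect_local).
by apply: eq_bigr => j _; rewrite n0E PoszD.
Qed.

Lemma disc_defect_zshift u n : disc_defect (zshift p%:Z u) (n + p%:Z) = disc_defect u n.
Proof.
rewrite /disc_defect /disc_apply /shift_sum; congr (_ - _).
  by apply: eq_bigr => i _; rewrite cmv_pow_zshift // /zshift addrK.
by rewrite /zshift addrK (_ : n + p%:Z + p%:Z - p%:Z = n + p%:Z) //; lia.
Qed.

Lemma disc_defect_eq0 u n : disc_defect u n = 0.
Proof.
have defect0 (t : nat) m v : p%:Z <= m + (t * p)%N%:Z -> disc_defect v m = 0.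
  elim: t m v => [|t IHt] m v tm; first by apply: disc_defect_ge; lia.
  by rewrite -disc_defect_zshift; apply: IHt; move: tm; rewrite mulSn; lia.
apply: (defect0 (absz n).+1); rewrite mulSn.
have : (absz n <= absz n * p)%N by rewrite leq_pmulr.
lia.
Qed.

Lemma disc_apply_periodic : disc_apply p b b = shift_sum p.
Proof.
apply: boolp.funext => u; apply: boolp.funext => n; apply/eqP.
by rewrite -subr_eq0 -/(disc_defect u n) disc_defect_eq0.
Qed.

End PeriodicDiscriminant.

Section EntriesDetermineCoefficients.
Variable R : realType.
Local Notation C := R[i].
Variables (a b : int -> C) (s : int).
Hypothesis a_disk : is_cmv_coeffs a.
Hypothesis b_disk : is_cmv_coeffs b.
Hypothesis s_even : ~~ zparity s.
Hypothesis entry_addn2 :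
  forall n, ~~ zparity n -> cmv_entry a (n + s) (n + s + 2) = cmv_entry b n (n + 2).
Hypothesis entry_subn2 : forall n, cmv_entry a (n + s) (n + s - 2) = cmv_entry b n (n - 2).
Hypothesis entry_subn1 : forall n, cmv_entry a (n + s) (n + s - 1) = cmv_entry b n (n - 1).
Hypothesis entry_addn1 : forall n, cmv_entry a (n + s) (n + s + 1) = cmv_entry b n (n + 1).

Lemma rho_mul_rho_shift k :
  rho (a (k + s)) * rho (a (k + s + 1)) = rho (b k) * rho (b (k + 1)).
Proof.
have [k_odd|k_even] := boolP (zparity k).
  have k2_odd : zparity (k + 2) by rewrite zparityD_even.
  have k2s_odd : zparity (k + 2 + s) by rewrite zparityD_even.
  have := entry_subn2 (k + 2); rewrite !cmv_entry_odd_subn2 // addrK.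
  rewrite (_ : k + 2 + s - 1 = k + s + 1); last lia.
  rewrite (_ : k + 2 + s - 2 = k + s); last lia.
  rewrite (_ : k + 2 - 1 = k + 1); last lia.
  by rewrite mulrC => ->; rewrite mulrC.
by have := entry_addn2 k_even; rewrite !cmv_entry_even_addn2 ?zparityD_even.
Qed.

Lemma rho_mul_coef_shift k : rho (a (k + s + 1)) * a (k + s) = rho (b (k + 1)) * b k.
Proof.
have [k_odd|k_even] := boolP (zparity k).
  have k2_odd : zparity (k + 2) by rewrite zparityD_even.
  have k2s_odd : zparity (k + 2 + s) by rewrite zparityD_even.
  have := entry_subn1 (k + 2); rewrite !cmv_entry_odd_subn1 // addrK => /oppr_inj.
  rewrite (_ : k + 2 + s - 1 = k + s + 1); last lia.
  rewrite (_ : k + 2 + s - 2 = k + s); last lia.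
  by rewrite (_ : k + 2 - 1 = k + 1); last lia.
have k1_odd : zparity (k + 1) by rewrite zparityD1.
have k1s_odd : zparity (k + 1 + s) by rewrite zparityD_even.
have := entry_addn1 (k + 1); rewrite !cmv_entry_odd_addn1 // addrK => /oppr_inj.
rewrite (_ : k + 1 + s - 1 = k + s); last lia.
by rewrite (_ : k + 1 + s = k + s + 1) 1?mulrC 1?[RHS]mulrC; last lia.
Qed.

Lemma rho_sqr_entries (c d : C) : in_disk d ->
  rho d * rho d = (rho c * rho d) * (rho c * rho d) + (rho d * c) * (rho d * c)^*.
Proof.
move=> d_disk; rewrite rmorphM /= conjc_rho //.
apply: (eq_mod_rho (a := c) (t := - (rho d * rho d))); ring.
Qed.

Lemma rho_shift j : rho (a (j + s)) = rho (b j).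
Proof.
have nneg_rho (x : C) : in_disk x -> rho x \is Num.nneg by rewrite nnegrE => /rho_gt0/ltW.
apply: (@pexpIrn _ 2) => //; rewrite ?nneg_rho // !expr2.
rewrite (rho_sqr_entries (a (j - 1 + s))) // (rho_sqr_entries (b (j - 1))) //.
have -> : j + s = j - 1 + s + 1 by lia.
by rewrite rho_mul_rho_shift rho_mul_coef_shift subrK.
Qed.

Lemma coeffs_shift_of_entries k : a (k + s) = b k.
Proof.
have := rho_mul_coef_shift k; rewrite (_ : k + s + 1 = k + 1 + s); last lia.
by rewrite rho_shift; apply: mulfI; apply: rho_neq0.
Qed.

End EntriesDetermineCoefficients.

Lemma eigcoef0 (R : realType) (b : int -> R[i]) k : eigcoef b k 0 = zdelta 0 k.
Proof. by rewrite /eigcoef /= addr0. Qed.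

Section DiscriminantEquation.
Variable R : realType.
Local Notation C := R[i].
Variables (a0 a : int -> C) (p : nat).
Hypothesis p_gt0 : (0 < p)%N.
Hypothesis p_even : ~~ odd p.
Hypothesis a_disk : is_cmv_coeffs a.

Lemma disc_apply_cmv u : disc_apply p a0 a (cmv a u) = cmv a (disc_apply p a0 a u).
Proof.
apply: boolp.funext => n; rewrite /disc_apply.
rewrite (@zlinear_sum _ _ _ (fun k => (disc_poly p a0)`_k)
  (fun k => cmv_pow a (k%:Z - (p./2)%:Z) u) _ (cmv_linear a)).
by apply: eq_bigr => i _; rewrite cmv_pow_cmv.
Qed.

Hypothesis disc_shift : disc_apply p a0 a = shift_sum p.

Lemma shift_sum_cmv u : shift_sum p (cmv a u) = cmv a (shift_sum p u).
Proof. by rewrite -disc_shift disc_apply_cmv. Qed.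

Lemma cmv_entry_shift_sum n m : cmv_entry a (n - p%:Z) m + cmv_entry a (n + p%:Z) m =
  cmv_entry a n (m + p%:Z) + cmv_entry a n (m - p%:Z).
Proof.
have := congr1 (fun F => F n) (shift_sum_cmv (zdelta m)); rewrite /shift_sum /= => ->.
rewrite /cmv_entry -[cmv a (zdelta _) n]mul1r -cmv_linear; congr (cmv a _ n).
apply: boolp.funext => x.
have addr_eq (y z w : int) : (y + w == z) = (y == z - w) by rewrite -subr_eq opprK.
by rewrite mul1r /zdelta subr_eq addr_eq.
Qed.

Lemma cmv_entry_vanish r c : c <= r - 3 \/ (~~ zparity r /\ c = r - 2) -> cmv_entry a r c = 0.
Proof.
case=> [far | [r_even ->]]; last exact: cmv_entry_even_subn2.
by apply: cmv_entry_far; lia.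
Qed.

Lemma cmv_entryDp n d : -2 <= d <= 1 \/ (d = 2 /\ ~~ zparity n) ->
  cmv_entry a (n + p%:Z) (n + p%:Z + d) = cmv_entry a n (n + d).
Proof.
move=> d_range.
have vanish r : r = n + p%:Z \/ r = n + p%:Z + p%:Z -> cmv_entry a r (r + d - 2 * p%:Z) = 0.
  move=> r_cases; apply: cmv_entry_vanish.
  have [d_le1 | [-> n_even]] := d_range; first by left; lia.
  have [p2|p_ge4] : p = 2%N \/ (4 <= p)%N by lia.
    right; split; last lia.
    by case: r_cases => ->; rewrite !zparityD_even // p2.
  by left; lia.
have := cmv_entry_shift_sum (n + p%:Z) (n + d).
rewrite addrK [X in _ + X = _](_ : _ = 0); last first.
  by rewrite -[X in _ = X](vanish (n + p%:Z + p%:Z)); [congr cmv_entry; lia | right].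
rewrite [X in _ = _ + X](_ : _ = 0); last first.
  by rewrite -[X in _ = X](vanish (n + p%:Z)); [congr cmv_entry; lia | left].
by rewrite !addr0 addrAC.
Qed.

Lemma coeffs_periodic : periodic p a.
Proof.
move=> k; apply: (coeffs_shift_of_entries a_disk a_disk) => [|n n_even|n|n|n];
  rewrite ?cmv_entryDp //; [by right | by left..].
Qed.

Lemma disc_poly_eq : disc_poly p a = disc_poly p a0.
Proof.
apply/polyP => i; have [ip|pi] := leqP i p; last first.
  by rewrite !nth_default // (leq_trans (size_disc_poly _ _)).
have pick (c : nat -> C) : \sum_(j < p.+1) c j *
    eigcoef a (i%:Z - (p./2)%:Z - (j%:Z - (p./2)%:Z)) 0 = c i.
  rewrite (bigD1 (Ordinal (ip : (i < p.+1)%N))) //= big1 => [|j ji].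
    by rewrite eigcoef0 subrr /zdelta eqxx mulr1 addr0.
  rewrite eigcoef0 /zdelta ifN ?mulr0 //.
  by apply: contra ji => /eqP ji0; apply/eqP/val_inj => /=; lia.
have := congr1 (fun F => F (eigcoef a (i%:Z - (p./2)%:Z)) 0) disc_shift.
rewrite /= disc_apply_eigcoef // /shift_sum (eigcoef_floquet a_disk p_even coeffs_periodic).
by rewrite !pick => ->.
Qed.

End DiscriminantEquation.

Theorem theorem4p1 (R : realType) (p : nat) (alpha0 alpha : int -> R[i]) :
  (0 < p)%N -> ~~ odd p ->
  is_cmv_coeffs alpha0 -> periodic p alpha0 ->
  is_cmv_coeffs alpha ->
  (disc_apply p alpha0 alpha = shift_sum p <-> in_iso_torus p alpha0 (cmv alpha)).
Proof.
move=> p_gt0 p_even _ _ alpha_disk.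
split=> [disc_shift | [beta [beta_disk beta_per cmvE discE]]].
  exists alpha; split=> //; first exact: coeffs_periodic disc_shift.
  exact: disc_poly_eq disc_shift.
have -> : alpha = beta.
  apply: boolp.funext => k; rewrite -{1}[k]addr0.
  by apply: (coeffs_shift_of_entries alpha_disk beta_disk) => // n; rewrite addr0 /cmv_entry cmvE.
by rewrite -(disc_apply_periodic beta_disk p_gt0 p_even beta_per) /disc_apply discE.
Qed.
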